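(* Let $K\ge2$, $\varepsilon>0$, $\gamma=\gamma(\mu^* )\in\mathcal{P}^\varepsilon(K)$, $\eta\ge0$ and $\varepsilon_\pi\in[0,1]$. For $o\in\mathbb{R}^K_{>0}$ define $$\pi^{\varepsilon_\pi}_k(o)=(1-\varepsilon_\pi)\frac{\gamma_ko_k^{-\eta}}{\sum_{\ell}\gamma_\ell o_\ell^{-\eta}}+\varepsilon_\pi\gamma_k.$$ Then $\mathbf 1=(1,\dots,1)$ is a globally asymptotically stable equilibrium of the system $\dot o_k(t)=\dfrac{\pi^{\varepsilon_\pi}_k(o(t))}{\gamma_k}-o_k(t)$, $k=1,\dots,K$.
   Context: $\mathcal{P}^\varepsilon(K)$ is the set of probability vectors on $\{1,\dots,K\}$ with entries $\ge\varepsilon$. For $\dot z=h(z)$ with solutions $z(t;z_0,t_0)$, an equilibrium $z^*$ is globally asymptotically stable if (1) for each $\eta'>0$ there is $\delta>0$ independent of $t_0$ with $|z_0-z^*|<\delta\Rightarrow|z(t;z_0,t_0)-z^*|<\eta'$ for all $t\ge t_0\ge 0$, and (2) for all $\eta',\rho>0$ there is $T<\infty$ independent of $t_0$ with $|z(t;z_0,t_0)-z^*|<\eta'$ for $t\ge t_0+T$ whenever $|z_0-z^*|<\rho$. *)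

From Stdlib Require Import Reals.
From Coquelicot Require Import Coquelicot.
Open Scope R_scope.

(* Vectors in R^K are functions nat -> R; only indices k < K matter. *)

Fixpoint rsum (n : nat) (f : nat -> R) : R :=
  match n with O => 0 | S m => rsum m f + f m end.

Definition in_Peps (K : nat) (eps : R) (g : nat -> R) : Prop :=
  (forall k, (k < K)%nat -> eps <= g k) /\ rsum K g = 1.

Definition pos_vec (K : nat) (o : nat -> R) : Prop :=
  forall k, (k < K)%nat -> 0 < o k.

Definition distK (K : nat) (x y : nat -> R) : R :=
  sqrt (rsum K (fun k => (x k - y k) ^ 2)).

Definition pi_eps (K : nat) (gamma : nat -> R) (eta epspi : R)
    (o : nat -> R) (k : nat) : R :=
  (1 - epspi) * (gamma k * Rpower (o k) (- eta))
    / rsum K (fun l => gamma l * Rpower (o l) (- eta))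
  + epspi * gamma k.

Definition hfield (K : nat) (gamma : nat -> R) (eta epspi : R)
    (o : nat -> R) (k : nat) : R :=
  pi_eps K gamma eta epspi o k / gamma k - o k.

Definition is_solution (K : nat) (h : (nat -> R) -> nat -> R)
    (dom : (nat -> R) -> Prop) (z : R -> nat -> R) (t0 : R) : Prop :=
  (forall t, t0 <= t -> dom (z t)) /\
  (forall k, (k < K)%nat ->
     (forall t, t0 < t -> is_derive (fun s => z s k) t (h (z t) k)) /\
     filterlim (fun s => z s k) (at_right t0) (locally (z t0 k))).

Definition is_equilibrium (K : nat) (h : (nat -> R) -> nat -> R)
    (dom : (nat -> R) -> Prop) (zs : nat -> R) : Prop :=
  dom zs /\ forall k, (k < K)%nat -> h zs k = 0.

Definition GAS (K : nat) (h : (nat -> R) -> nat -> R)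
    (dom : (nat -> R) -> Prop) (zs : nat -> R) : Prop :=
  (forall eta', 0 < eta' -> exists delta, 0 < delta /\
     forall t0 z, 0 <= t0 -> is_solution K h dom z t0 ->
       distK K (z t0) zs < delta ->
       forall t, t0 <= t -> distK K (z t) zs < eta') /\
  (forall eta' rho, 0 < eta' -> 0 < rho -> exists T : R,
     forall t0 z, 0 <= t0 -> is_solution K h dom z t0 ->
       distK K (z t0) zs < rho ->
       forall t, t0 + T <= t -> distK K (z t) zs < eta').

(** The weighted squared distance V(o) = sum_k gamma_k (o_k - 1)^2 is a strict
    Lyapunov function: along the flow, V' = -2 V + 2 (sum_k o_k pi_k(o) - sum_k gamma_k o_k),
    and the bracket is nonpositive by Chebyshev's sum inequality, because the
    weights o_k^(-eta) of the policy are ordered oppositely to o.  Hence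
    V(o(t)) <= e^(-2 (t - t0)) V(o(t0)), and since eps <= gamma_k <= 1 the
    function V is comparable to the squared Euclidean distance to 1, which gives
    uniform stability and uniform attractivity. *)
From Stdlib Require Import Reals Lra Lia.
From Coquelicot Require Import Coquelicot.
Open Scope R_scope.

Lemma rsum_ext n f g :
  (forall k, (k < n)%nat -> f k = g k) -> rsum n f = rsum n g.
Proof.
  induction n as [|n IH]; simpl; intros H; [reflexivity|].
  rewrite IH by (intros; apply H; lia).
  rewrite H by lia; reflexivity.
Qed.

Lemma rsum_le n f g :
  (forall k, (k < n)%nat -> f k <= g k) -> rsum n f <= rsum n g.
Proof.
  induction n as [|n IH]; simpl; intros H; [lra|].
  assert (f n <= g n) by (apply H; lia).
  assert (rsum n f <= rsum n g) by (apply IH; intros; apply H; lia).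
  lra.
Qed.

Lemma rsum_zero n : rsum n (fun _ => 0) = 0.
Proof. induction n as [|n IH]; simpl; [|rewrite IH]; ring. Qed.

Lemma rsum_nonneg n f :
  (forall k, (k < n)%nat -> 0 <= f k) -> 0 <= rsum n f.
Proof. intros H. rewrite <- (rsum_zero n). apply rsum_le, H. Qed.

Lemma rsum_ge_term n f k :
  (forall i, (i < n)%nat -> 0 <= f i) -> (k < n)%nat -> f k <= rsum n f.
Proof.
  intros Hf Hk.
  induction n as [|n IH]; simpl; [lia|].
  assert (Hrest : 0 <= rsum n f) by (apply rsum_nonneg; intros; apply Hf; lia).
  destruct (Nat.eq_dec k n) as [->|Hkn]; [lra|].
  assert (f k <= rsum n f) by (apply IH; [intros; apply Hf|]; lia).
  assert (0 <= f n) by (apply Hf; lia).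
  lra.
Qed.

Lemma rsum_plus n f g : rsum n (fun k => f k + g k) = rsum n f + rsum n g.
Proof. induction n as [|n IH]; simpl; [ring|]. rewrite IH; ring. Qed.

Lemma rsum_scal n c f : rsum n (fun k => c * f k) = c * rsum n f.
Proof. induction n as [|n IH]; simpl; [ring|]. rewrite IH; ring. Qed.

Lemma rsum_chebyshev_opposite n g o a :
  (forall k, (k < n)%nat -> 0 <= g k) ->
  (forall k l, (k < n)%nat -> (l < n)%nat -> (o k - o l) * (a k - a l) <= 0) ->
  rsum n (fun k => g k * o k * a k) * rsum n g <=
  rsum n (fun k => g k * o k) * rsum n (fun k => g k * a k).
Proof.
  intros Hg Hoa.
  assert (Hdouble :
    rsum n (fun k => rsum n (fun l => g k * g l * ((o k - o l) * (a k - a l))))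
    = 2 * (rsum n (fun k => g k * o k * a k) * rsum n g
           - rsum n (fun k => g k * o k) * rsum n (fun k => g k * a k))).
  { rewrite (rsum_ext n _ (fun k =>
        rsum n g * (g k * o k * a k) + rsum n (fun l => g l * o l * a l) * g k
        + (- rsum n (fun l => g l * a l)) * (g k * o k)
        + (- rsum n (fun l => g l * o l)) * (g k * a k))).
    - rewrite !rsum_plus, !rsum_scal. ring.
    - intros k _.
      rewrite (rsum_ext n _ (fun l =>
          (g k * o k * a k) * g l + g k * (g l * o l * a l)
          + (- (g k * o k)) * (g l * a l) + (- (g k * a k)) * (g l * o l)))
        by (intros; ring).
      rewrite !rsum_plus, !rsum_scal. ring. }
  assert (Hneg :
    rsum n (fun k => rsum n (fun l => g k * g l * ((o k - o l) * (a k - a l)))) <= 0).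
  { rewrite <- (rsum_zero n). apply rsum_le; intros k Hk.
    rewrite <- (rsum_zero n). apply rsum_le; intros l Hl.
    assert (0 <= g k * g l) by (apply Rmult_le_pos; auto).
    assert (Hkl := Hoa k l Hk Hl).
    nra. }
  lra.
Qed.

Lemma Rpower_opp_antitone x y eta :
  0 <= eta -> 0 < x <= y -> Rpower y (- eta) <= Rpower x (- eta).
Proof.
  intros Heta Hxy.
  rewrite !Rpower_Ropp.
  apply Rinv_le_contravar; [unfold Rpower; apply exp_pos|].
  apply Rle_Rpower_l; lra.
Qed.

Definition lyapunov (K : nat) (gamma o : nat -> R) : R :=
  rsum K (fun k => gamma k * (o k - 1) ^ 2).

Lemma distK_sq K x y : distK K x y ^ 2 = rsum K (fun k => (x k - y k) ^ 2).
Proof. apply pow2_sqrt, rsum_nonneg; intros; apply pow2_ge_0. Qed.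

Lemma lyapunov_distK_sandwich K gamma c d o :
  (forall k, (k < K)%nat -> c <= gamma k <= d) ->
  c * distK K o (fun _ => 1) ^ 2 <= lyapunov K gamma o <= d * distK K o (fun _ => 1) ^ 2.
Proof.
  intros Hgamma.
  rewrite distK_sq, <- !rsum_scal.
  split; apply rsum_le; intros k Hk;
    specialize (Hgamma k Hk); assert (0 <= (o k - 1) ^ 2) by apply pow2_ge_0; nra.
Qed.

Lemma rsum_is_derive n (f : nat -> R -> R) df x :
  (forall k, (k < n)%nat -> is_derive (f k) x (df k)) ->
  is_derive (fun t => rsum n (fun k => f k t)) x (rsum n df).
Proof.
  induction n as [|n IH]; simpl; intros H.
  - apply (is_derive_const 0 x).
  - apply (is_derive_plus (fun t => rsum n (fun k => f k t)) (f n)).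
    + apply IH; intros; apply H; lia.
    + apply H; lia.
Qed.

Lemma rsum_filterlim {T} {F : (T -> Prop) -> Prop} {FF : Filter F}
    n (f : nat -> T -> R) l :
  (forall k, (k < n)%nat -> filterlim (f k) F (locally (l k))) ->
  filterlim (fun t => rsum n (fun k => f k t)) F (locally (rsum n l)).
Proof.
  induction n as [|n IH]; simpl; intros H.
  - apply filterlim_const.
  - apply (filterlim_comp_2 (G := locally (rsum n l)) (H := locally (l n))
             (fun t => rsum n (fun k => f k t)) (f n) Rplus).
    + apply IH; intros; apply H; lia.
    + apply H; lia.
    + apply (filterlim_plus (rsum n l) (l n)).
Qed.

Lemma le_at_right_of_derive_nonpos (W dW : R -> R) t0 :
  (forall s, t0 < s -> is_derive W s (dW s)) ->
  (forall s, t0 < s -> dW s <= 0) ->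
  filterlim W (at_right t0) (locally (W t0)) ->
  forall t, t0 <= t -> W t <= W t0.
Proof.
  intros HW Hneg Hlim t Ht.
  destruct (Rle_lt_or_eq_dec _ _ Ht) as [Hlt | <-]; [|lra].
  assert (Hmono : forall s, t0 < s <= t -> W t <= W s).
  { intros s Hs.
    destruct (MVT_gen W s t dW) as [c [Hc Hmvt]];
      rewrite ?Rmin_left, ?Rmax_right in * by lra.
    - intros x Hx. apply HW. lra.
    - intros x Hx. apply derivable_continuous_pt.
      exists (dW x). apply is_derive_Reals, HW. lra.
    - assert (dW c <= 0) by (apply Hneg; lra). nra. }
  apply (closed_filterlim_loc W (fun u => W t <= u) (W t0) Hlim); [|apply closed_ge].
  exists (mkposreal _ (proj2 (Rlt_0_minus _ _) Hlt)).
  intros s Hball Hs.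
  assert (Habs : Rabs (s - t0) < t - t0) by exact Hball.
  apply Rabs_lt_between in Habs.
  apply Hmono. lra.
Qed.

Lemma exp_decay_of_derive_le (V dV : R -> R) r t0 :
  (forall s, t0 < s -> is_derive V s (dV s)) ->
  (forall s, t0 < s -> dV s <= - r * V s) ->
  filterlim V (at_right t0) (locally (V t0)) ->
  forall t, t0 <= t -> V t * exp (r * (t - t0)) <= V t0.
Proof.
  intros HV Hdecay Hlim t Ht.
  set (E := fun s => exp (r * (s - t0))).
  assert (HE : forall s, is_derive E s (r * E s))
    by (intros s; unfold E; auto_derive; [trivial | ring_simplify; reflexivity]).
  assert (HE0 : E t0 = 1) by (unfold E; rewrite Rminus_diag, Rmult_0_r; apply exp_0).
  rewrite <- (Rmult_1_r (V t0)), <- HE0.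
  apply (le_at_right_of_derive_nonpos (fun s => V s * E s)
           (fun s => (dV s + r * V s) * E s)); [| | |exact Ht].
  - intros s Hs.
    replace ((dV s + r * V s) * E s) with (dV s * E s + V s * (r * E s)) by ring.
    apply (is_derive_mult V E); [auto | apply HE | intros; apply Rmult_comm].
  - intros s Hs.
    assert (0 < E s) by apply exp_pos.
    assert (dV s <= - r * V s) by auto.
    nra.
  - apply (filterlim_comp_2 (G := locally (V t0)) (H := locally (E t0)) V E Rmult);
      [exact Hlim| |apply (filterlim_mult (V t0) (E t0))].
    apply (filterlim_filter_le_1 (F := locally t0)); [apply filter_le_within|].
    apply (ex_derive_continuous E). exists (r * E t0). apply HE.
Qed.

Lemma is_derive_lyapunov_solution K gamma h dom z t0 s :
  is_solution K h dom z t0 -> t0 < s ->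
  is_derive (fun t => lyapunov K gamma (z t)) s
    (rsum K (fun k => 2 * gamma k * (z s k - 1) * h (z s) k)).
Proof.
  intros [_ Hsol] Hs.
  apply (rsum_is_derive K (fun k t => gamma k * (z t k - 1) ^ 2)).
  intros k Hk.
  destruct (Hsol k Hk) as [Hder _].
  assert (Hsq : is_derive (fun x => gamma k * (x - 1) ^ 2) (z s k) (2 * gamma k * (z s k - 1)))
    by (auto_derive; [trivial | ring]).
  replace (2 * gamma k * (z s k - 1) * h (z s) k)
    with (h (z s) k * (2 * gamma k * (z s k - 1))) by ring.
  exact (is_derive_comp _ _ _ _ _ Hsq (Hder s Hs)).
Qed.

Lemma lyapunov_solution_right_continuous K gamma h dom z t0 :
  is_solution K h dom z t0 ->
  filterlim (fun t => lyapunov K gamma (z t)) (at_right t0)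
    (locally (lyapunov K gamma (z t0))).
Proof.
  intros [_ Hsol].
  apply (rsum_filterlim K (fun k t => gamma k * (z t k - 1) ^ 2)).
  intros k Hk.
  destruct (Hsol k Hk) as [_ Hright].
  apply (filterlim_comp _ _ _ (fun t => z t k) (fun x => gamma k * (x - 1) ^ 2)
           _ (locally (z t0 k)) _ Hright).
  apply (ex_derive_continuous (fun x => gamma k * (x - 1) ^ 2)). auto_derive. trivial.
Qed.

Section Policy.

Variables (K : nat) (gamma : nat -> R) (eta epspi : R).
Hypothesis gamma_pos : forall k, (k < K)%nat -> 0 < gamma k.
Hypothesis gamma_sum : rsum K gamma = 1.
Hypothesis eta_ge0 : 0 <= eta.
Hypothesis epspi_le1 : epspi <= 1.

Lemma pi_normalizer_pos o : 0 < rsum K (fun l => gamma l * Rpower (o l) (- eta)).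
Proof.
  assert (HK : (0 < K)%nat) by (destruct K; [simpl in gamma_sum; lra | lia]).
  assert (Hterm : forall l, (l < K)%nat -> 0 < gamma l * Rpower (o l) (- eta)).
  { intros l Hl. apply Rmult_lt_0_compat; [auto | unfold Rpower; apply exp_pos]. }
  apply (Rlt_le_trans _ _ _ (Hterm 0%nat HK)).
  apply (rsum_ge_term K (fun l => gamma l * Rpower (o l) (- eta)));
    [intros; left; auto | exact HK].
Qed.

Lemma rsum_pi_eps o : rsum K (pi_eps K gamma eta epspi o) = 1.
Proof.
  assert (HS := pi_normalizer_pos o).
  unfold pi_eps.
  rewrite rsum_plus, rsum_scal, gamma_sum.
  rewrite (rsum_ext K _ (fun k =>
      (1 - epspi) / rsum K (fun l => gamma l * Rpower (o l) (- eta))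
      * (gamma k * Rpower (o k) (- eta)))) by (intros; unfold Rdiv; ring).
  rewrite rsum_scal. field. lra.
Qed.

Lemma rsum_mul_pi_eps_le o :
  pos_vec K o ->
  rsum K (fun k => o k * pi_eps K gamma eta epspi o k) <= rsum K (fun k => gamma k * o k).
Proof.
  intros Ho.
  assert (HS := pi_normalizer_pos o).
  unfold pi_eps.
  rewrite (rsum_ext K _ (fun k =>
      ((1 - epspi) / rsum K (fun l => gamma l * Rpower (o l) (- eta)))
      * (gamma k * o k * Rpower (o k) (- eta)) + epspi * (gamma k * o k)))
    by (intros; unfold Rdiv; ring).
  rewrite rsum_plus, !rsum_scal.
  set (S := rsum K (fun l => gamma l * Rpower (o l) (- eta))) in *.
  assert (Hcheb : rsum K (fun k => gamma k * o k * Rpower (o k) (- eta))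
                  <= rsum K (fun k => gamma k * o k) * S).
  { rewrite <- (Rmult_1_r (rsum K _)), <- gamma_sum.
    apply rsum_chebyshev_opposite; [intros; left; auto|].
    intros k l Hk Hl.
    assert (Hok := Ho k Hk). assert (Hol := Ho l Hl).
    destruct (Rle_lt_dec (o k) (o l)).
    - assert (Rpower (o l) (- eta) <= Rpower (o k) (- eta))
        by (apply Rpower_opp_antitone; lra).
      nra.
    - assert (Rpower (o k) (- eta) <= Rpower (o l) (- eta))
        by (apply Rpower_opp_antitone; lra).
      nra. }
  assert (Hfactor : 0 <= (1 - epspi) / S)
    by (apply Rmult_le_pos; [lra | left; apply Rinv_0_lt_compat; exact HS]).
  assert (Hscaled : (1 - epspi) / S * rsum K (fun k => gamma k * o k * Rpower (o k) (- eta))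
                    <= (1 - epspi) * rsum K (fun k => gamma k * o k)).
  { apply (Rle_trans _ ((1 - epspi) / S * (rsum K (fun k => gamma k * o k) * S))).
    - apply Rmult_le_compat_l; assumption.
    - right; field; lra. }
  lra.
Qed.

Lemma hfield_one k :
  (k < K)%nat -> hfield K gamma eta epspi (fun _ => 1) k = 0.
Proof.
  intros Hk.
  assert (Hone : Rpower 1 (- eta) = 1)
    by (unfold Rpower; rewrite ln_1, Rmult_0_r; apply exp_0).
  assert (gamma k <> 0) by (apply Rgt_not_eq, gamma_pos, Hk).
  unfold hfield, pi_eps. rewrite Hone.
  rewrite (rsum_ext K _ gamma) by (intros; ring).
  rewrite gamma_sum. field. assumption.
Qed.

(* Summand-wise, 2 gamma_k (o_k - 1) h_k + 2 gamma_k (o_k - 1)^2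
   = 2 (o_k pi_k - pi_k - gamma_k o_k + gamma_k), and sum pi = sum gamma = 1. *)
Lemma lyapunov_derivative_le o :
  pos_vec K o ->
  rsum K (fun k => 2 * gamma k * (o k - 1) * hfield K gamma eta epspi o k)
  <= -2 * lyapunov K gamma o.
Proof.
  intros Ho.
  set (pi := pi_eps K gamma eta epspi o).
  rewrite (rsum_ext K _ (fun k =>
      2 * (o k * pi k) + (-2) * pi k + (-2) * (gamma k * o k) + 2 * gamma k
      + (-2) * (gamma k * (o k - 1) ^ 2))).
  - rewrite !rsum_plus, !rsum_scal.
    unfold pi; rewrite rsum_pi_eps, gamma_sum.
    assert (H := rsum_mul_pi_eps_le o Ho).
    unfold lyapunov. lra.
  - intros k Hk.
    assert (gamma k <> 0) by (apply Rgt_not_eq, gamma_pos, Hk).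
    unfold hfield; fold pi. field. assumption.
Qed.

Lemma lyapunov_solution_decay z t0 :
  is_solution K (hfield K gamma eta epspi) (pos_vec K) z t0 ->
  forall t, t0 <= t ->
  lyapunov K gamma (z t) * exp (2 * (t - t0)) <= lyapunov K gamma (z t0).
Proof.
  intros Hz.
  apply (exp_decay_of_derive_le (fun s => lyapunov K gamma (z s))
           (fun s => rsum K (fun k => 2 * gamma k * (z s k - 1)
                                      * hfield K gamma eta epspi (z s) k))).
  - intros s Hs. exact (is_derive_lyapunov_solution _ _ _ _ _ _ _ Hz Hs).
  - intros s Hs.
    apply lyapunov_derivative_le.
    destruct Hz as [Hdom _]. apply Hdom. lra.
  - exact (lyapunov_solution_right_continuous _ _ _ _ _ _ Hz).
Qed.

End Policy.

Lemma GAS_of_exp_decay K h dom zs c r :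
  0 < c -> 0 < r ->
  (forall z t0, is_solution K h dom z t0 -> forall t, t0 <= t ->
     c * distK K (z t) zs ^ 2 * exp (r * (t - t0)) <= distK K (z t0) zs ^ 2) ->
  GAS K h dom zs.
Proof.
  intros Hc Hr Hdecay. split.
  - intros e He. exists (e * sqrt c).
    split; [apply Rmult_lt_0_compat; [lra | apply sqrt_lt_R0; lra]|].
    intros t0 z _ Hz H0 t Ht.
    assert (Hb := Hdecay z t0 Hz t Ht).
    assert (Hexp : 1 <= exp (r * (t - t0))) by (pose proof (exp_ineq1_le (r * (t - t0))); nra).
    assert (Hsqrt : sqrt c * sqrt c = c) by (apply sqrt_sqrt; lra).
    assert (0 <= distK K (z t0) zs) by apply sqrt_pos.
    assert (0 <= distK K (z t) zs) by apply sqrt_pos.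
    assert (Hd0 : distK K (z t0) zs ^ 2 < e ^ 2 * c) by nra.
    apply Rnot_le_lt. intros Hge.
    assert (e ^ 2 <= distK K (z t) zs ^ 2) by (apply pow_incr; lra).
    assert (c * distK K (z t) zs ^ 2 <= c * distK K (z t) zs ^ 2 * exp (r * (t - t0)))
      by (assert (0 <= c * distK K (z t) zs ^ 2) by (apply Rmult_le_pos; [lra | apply pow2_ge_0]);
          nra).
    nra.
  - intros e rho He Hrho.
    assert (Hrate : 0 < c * r * e ^ 2) by (apply Rmult_lt_0_compat; [nra | apply pow_lt; lra]).
    exists (rho ^ 2 / (c * r * e ^ 2)).
    set (T := rho ^ 2 / (c * r * e ^ 2)).
    assert (HT : c * r * e ^ 2 * T = rho ^ 2) by (unfold T; field; lra).
    assert (0 <= T) by (apply Rdiv_le_0_compat; [apply pow2_ge_0 | exact Hrate]).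
    intros t0 z _ Hz H0 t Ht.
    assert (Hb := Hdecay z t0 Hz t ltac:(lra)).
    assert (Hexp := exp_ineq1_le (r * (t - t0))).
    assert (0 <= distK K (z t0) zs) by apply sqrt_pos.
    assert (0 <= distK K (z t) zs) by apply sqrt_pos.
    apply Rnot_le_lt. intros Hge.
    assert (e ^ 2 <= distK K (z t) zs ^ 2) by (apply pow_incr; lra).
    assert (c * e ^ 2 * (1 + r * T) <= distK K (z t0) zs ^ 2).
    { apply (Rle_trans _ (c * distK K (z t) zs ^ 2 * exp (r * (t - t0)))); [|exact Hb].
      apply Rmult_le_compat; nra. }
    nra.
Qed.

Theorem lemma6 (K : nat) (eps : R) (gamma : nat -> R) (eta epspi : R) :
  (2 <= K)%nat -> 0 < eps -> in_Peps K eps gamma -> 0 <= eta ->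
  0 <= epspi <= 1 ->
  is_equilibrium K (hfield K gamma eta epspi) (pos_vec K) (fun _ => 1) /\
  GAS K (hfield K gamma eta epspi) (pos_vec K) (fun _ => 1).
Proof.
  intros _ Heps [Hge Hsum] Heta Hepspi.
  assert (Hpos : forall k, (k < K)%nat -> 0 < gamma k)
    by (intros k Hk; specialize (Hge k Hk); lra).
  assert (Hbounds : forall k, (k < K)%nat -> eps <= gamma k <= 1).
  { intros k Hk. split; [auto|].
    rewrite <- Hsum. apply rsum_ge_term; [intros; left|]; auto. }
  split.
  - split; [intros k _; lra|].
    intros k Hk. apply hfield_one; auto.
  - apply (GAS_of_exp_decay _ _ _ _ eps 2); [lra | lra |].
    intros z t0 Hz t Ht.
    destruct (lyapunov_distK_sandwich K gamma eps 1 (z t) Hbounds) as [Hlow _].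
    destruct (lyapunov_distK_sandwich K gamma eps 1 (z t0) Hbounds) as [_ Hup].
    assert (Hdecay := lyapunov_solution_decay K gamma eta epspi
                        Hpos Hsum Heta (proj2 Hepspi) z t0 Hz t Ht).
    assert (0 < exp (2 * (t - t0))) by apply exp_pos.
    nra.
Qed.
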